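(* Let $\{R_k\},\{T_k\},\{a_k\},\{s_k\}$ be nonnegative sequences with $R_{k+1}+T_{k+1}\le R_k+(1+a_k)T_k+s_k$ for all $k\ge0$, $R_0,T_0<\infty$, $\sum_{k=0}^\infty s_k<\infty$, and $a_k=\hat\rho\rho_k$ for all $k$, where $\hat\rho\ge0$ and $\{\rho_k\}$ is nonnegative with $\sum_{k=0}^\infty\rho_k<\infty$ and $\sum_{k=0}^\infty k\rho_k<\infty$. Then there exists $\hat\rho_0>0$ (depending on $R_0,T_0,\{s_k\},\{\rho_k\}$) such that whenever $\hat\rho\in[0,\hat\rho_0]$ the sequence $\{R_k\}$ is bounded. *)

From Stdlib Require Import Reals.
From Coquelicot Require Export Coquelicot.
Open Scope R_scope.

(* The sum [u_k = R_k + T_k] obeys [u_(k+1) <= (1 + a_k) u_k + s_k], and the discrete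
   Grönwall inequality, via [1 + a <= exp a], gives
   [u_k <= (u_0 + sum_(i<k) s_i) exp (sum_(i<k) a_i)].  As [sum a_k = rhohat sum rho_k]
   is finite, [R_k <= u_k] is bounded for every [rhohat >= 0]. *)

From Stdlib Require Import Reals Lra.
From Coquelicot Require Import Coquelicot.
Open Scope R_scope.

(* Unlike [sum_n f k], [psum f k] sums the first [k] terms, so it is empty at [k = 0]. *)
Fixpoint psum (f : nat -> R) (k : nat) : R :=
  match k with O => 0 | S j => psum f j + f j end.

Lemma psum_nonneg (f : nat -> R) (k : nat) :
  (forall i, 0 <= f i) -> 0 <= psum f k.
Proof.
  intros Hf; induction k as [|k IH]; simpl; [lra|].
  specialize (Hf k); lra.
Qed.

Lemma psum_succ_sum_n (f : nat -> R) (k : nat) : psum f (S k) = sum_n f k.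
Proof.
  induction k as [|k IH]; simpl in *.
  - rewrite sum_O; lra.
  - rewrite sum_Sn, <- IH; reflexivity.
Qed.

Lemma sum_n_le_Series (f : nat -> R) (k : nat) :
  (forall i, 0 <= f i) -> ex_series f -> sum_n f k <= Series f.
Proof.
  intros Hf Hs; apply is_lim_seq_incr_compare.
  - exact (Series_correct _ Hs).
  - intros n; rewrite sum_Sn; specialize (Hf (S n)); unfold plus; simpl; lra.
Qed.

Lemma psum_le_Series (f : nat -> R) (k : nat) :
  (forall i, 0 <= f i) -> ex_series f -> psum f k <= Series f.
Proof.
  intros Hf Hs.
  apply Rle_trans with (psum f (S k)); [simpl; specialize (Hf k); lra|].
  rewrite psum_succ_sum_n; exact (sum_n_le_Series f k Hf Hs).
Qed.

Section DiscreteGronwall.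

Variables u b s : nat -> R.
Hypothesis u0_nonneg : 0 <= u 0%nat.
Hypothesis b_nonneg : forall k, 0 <= b k.
Hypothesis s_nonneg : forall k, 0 <= s k.
Hypothesis u_rec : forall k, u (S k) <= (1 + b k) * u k + s k.

Lemma discrete_gronwall (k : nat) :
  u k <= (u 0%nat + psum s k) * exp (psum b k).
Proof.
  induction k as [|k IH]; simpl.
  - rewrite exp_0; lra.
  - rewrite <- Rplus_assoc, exp_plus.
    set (C := u 0%nat + psum s k); set (E := exp (psum b k)).
    assert (C_nonneg : 0 <= C) by (pose proof (psum_nonneg s k s_nonneg); unfold C; lra).
    assert (E_ge1 : 1 <= E).
    { pose proof (exp_ineq1_le (psum b k)); pose proof (psum_nonneg b k b_nonneg).
      unfold E; lra. }
    assert (eb_ge : 1 + b k <= exp (b k)) by apply exp_ineq1_le.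
    pose proof (u_rec k); pose proof (b_nonneg k); pose proof (s_nonneg k).
    assert (Hstep : (1 + b k) * u k <= (1 + b k) * (C * E))
      by (apply Rmult_le_compat_l; [lra | exact IH]).
    assert (Hgrow : (1 + b k) * (C * E) <= exp (b k) * (C * E))
      by (apply Rmult_le_compat_r; [apply Rmult_le_pos; lra | exact eb_ge]).
    assert (Egrow : 1 <= E * exp (b k)) by nra.
    assert (Hs : s k * 1 <= s k * (E * exp (b k)))
      by (apply Rmult_le_compat_l; [lra | exact Egrow]).
    replace ((C + s k) * (E * exp (b k))) with (exp (b k) * (C * E) + s k * (E * exp (b k)))
      by ring.
    lra.
Qed.

Lemma discrete_gronwall_bounded :
  ex_series s -> ex_series b ->
  forall k, u k <= (u 0%nat + Series s) * exp (Series b).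
Proof.
  intros Hs Hb k.
  pose proof (psum_le_Series s k s_nonneg Hs) as Ps.
  pose proof (psum_le_Series b k b_nonneg Hb) as Pb.
  apply Rle_trans with (1 := discrete_gronwall k).
  apply Rmult_le_compat.
  - pose proof (psum_nonneg s k s_nonneg); lra.
  - left; apply exp_pos.
  - lra.
  - destruct Pb as [Pb | ->]; [left; apply exp_increasing, Pb | lra].
Qed.

End DiscreteGronwall.

Theorem mainTheorem20 :
  forall (R0 T0 : R) (s rho : nat -> R),
    0 <= R0 -> 0 <= T0 ->
    (forall k, 0 <= s k) -> ex_series s ->
    (forall k, 0 <= rho k) -> ex_series rho ->
    ex_series (fun k => INR k * rho k) ->
    exists rhohat0 : R, 0 < rhohat0 /\
      forall rhohat : R, 0 <= rhohat <= rhohat0 ->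
      forall (Rs Ts a : nat -> R),
        (forall k, 0 <= Rs k) -> (forall k, 0 <= Ts k) -> (forall k, 0 <= a k) ->
        Rs 0%nat = R0 -> Ts 0%nat = T0 ->
        (forall k, a k = rhohat * rho k) ->
        (forall k, Rs (S k) + Ts (S k) <= Rs k + (1 + a k) * Ts k + s k) ->
        exists M : R, forall k, Rs k <= M.
Proof.
  intros R0 T0 s rho HR0 HT0 Hs Hse Hrho Hrhoe _.
  exists 1; split; [lra|].
  intros rhohat _ Rs Ts a HRs HTs Ha E0 E1 Ea Hrec.
  set (u k := Rs k + Ts k).
  assert (u_rec : forall k, u (S k) <= (1 + a k) * u k + s k).
  { intros k; pose proof (Hrec k); pose proof (HRs k); pose proof (Ha k).
    unfold u; nra. }
  assert (Hae : ex_series a).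
  { refine (ex_series_ext _ _ _ (ex_series_scal_r rhohat rho Hrhoe)).
    intros k; change (rho k * rhohat = a k); rewrite Ea; ring. }
  assert (u0_nonneg : 0 <= u 0%nat) by (unfold u; lra).
  exists ((u 0%nat + Series s) * exp (Series a)); intros k.
  pose proof (discrete_gronwall_bounded u a s u0_nonneg Ha Hs u_rec Hse Hae k).
  pose proof (HTs k); unfold u in *; lra.
Qed.
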